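(* Let $t_0\in(0,1)$, $\alpha_a,\alpha_b\in\mathbb{R}$, and restrict the quasimomentum to the diagonal $\theta=(\theta_1,-\theta_1)$, $\theta_1\in[-\pi,\pi]$, so that $F=1+e^{i\theta_1}+e^{-i\theta_1}=1+2\cos\theta_1$ is real. Consider the four branches $$r(F)=\frac{-\alpha_a-\alpha_b\pm\sqrt{4(F-s\,t_0^2)^2+(\alpha_a-\alpha_b)^2}}{2(3+t_0^2)},\qquad s\in\{+1,-1\},$$ which are the roots in $\eta$ of $\det M_2^{AA'}(\eta,\theta)=0$, where, with $T=3+t_0^2$, $$M_2^{AA'}(\eta,\theta)=\begin{pmatrix}-T\eta-\alpha_a&\bar F&0&t_0^2\\ F&-T\eta-\alpha_b&t_0^2&0\\ 0&t_0^2&-T\eta-\alpha_a&\bar F\\ t_0^2&0&F&-T\eta-\alpha_b\end{pmatrix}.$$ Then (a) if $\alpha_a=\alpha_b\ne0$, the dispersion relation of $H_2^{AA'}$ always has Dirac cones at $F=\pm t_0^2$; (b) if $\alpha_a\ne\alpha_b$, the dispersion relation of $H_2^{AA'}$ has no touch, i.e. it always has gaps.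
   Context: $H_2^{AA'}$ is the Schrödinger operator $-u''+q_0u$ (with $q_0$ continuous and even on $[0,1]$) on a periodic quantum graph formed by two identical hexagonal layers (edges of length 1, vertices alternately of type $A$ and type $B$) stacked in $AA'$ fashion: each type-$A$ vertex of one layer is joined by a vertical edge to a type-$B$ vertex of the other layer and vice versa. At each vertex the modified Neumann condition holds: $u_{a_1}(v)=u_{a_2}(v)=u_f(v)/t_0$ for in-layer edges $a_i$ and vertical edges $f$, and $\sum_a u_a'(v)\pm\sum_f t_0u_f'(v)=\delta_vu(v)$, with $\delta_v=\delta_a$ at type-$A$ and $\delta_b$ at type-$B$ vertices. For $\lambda$ outside the Dirichlet spectrum, with $\varphi_0,\varphi_1$ solutions of $-\varphi''+q_0\varphi=\lambda\varphi$ with $\varphi_0(0)=1,\varphi_0(1)=0,\varphi_1(0)=0,\varphi_1(1)=1$, set $\eta=\varphi_1'(1)/\varphi_1'(0)$ and $\alpha_k=\delta_k/\varphi_1'(0)$ (treated as real constants); $\lambda\in\sigma(H_2^{AA'})$ iff $\det M_2^{AA'}(\eta(\lambda),\theta)=0$ for some $\theta\in[-\pi,\pi]^2$, and the dispersion relation is identified with the root branches. A Dirac cone is a point $F_D$ where two branches meet with $r(F)-r(F_D)=\pm\gamma|F-F_D|+O(|F-F_D|^2)$, $\gamma\ne0$; gaps means no two branches touch. *)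

From Stdlib Require Import Reals.
Open Scope R_scope.

Definition sgn (b : bool) : R := if b then 1 else -1.

(* F = 1 + e^{i th} + e^{-i th} = 1 + 2 cos th on the diagonal theta = (th,-th) *)
Definition Fdiag (th : R) : R := 1 + 2 * cos th.

Definition branch (t0 aa ab : R) (s pm : bool) (F : R) : R :=
  (- aa - ab + sgn pm * sqrt (4 * (F - sgn s * t0 ^ 2) ^ 2 + (aa - ab) ^ 2))
  / (2 * (3 + t0 ^ 2)).

Definition dirac_cone (r1 r2 : R -> R) (FD : R) : Prop :=
  (exists th, - PI <= th <= PI /\ Fdiag th = FD) /\
  r1 FD = r2 FD /\
  exists gamma C delta : R, gamma <> 0 /\ 0 < delta /\
    forall th, - PI <= th <= PI -> Rabs (Fdiag th - FD) < delta ->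
      Rabs (r1 (Fdiag th) - r1 FD - gamma * Rabs (Fdiag th - FD))
        <= C * (Fdiag th - FD) ^ 2 /\
      Rabs (r2 (Fdiag th) - r2 FD + gamma * Rabs (Fdiag th - FD))
        <= C * (Fdiag th - FD) ^ 2.

(* With equal potentials the discriminant [(aa - ab)^2] vanishes, so the two
   branches of each pair are [c ± |F - s t0^2| / (3 + t0^2)]: an exact cone at
   [F = s t0^2], a value attained on the diagonal because [|s t0^2| < 1] lies
   in the range [[-1, 3]] of [1 + 2 cos].  With distinct potentials every square
   root is positive, so each upper branch lies strictly above the common centre
   [-(aa + ab) / (2 (3 + t0^2))] and each lower branch strictly below it. *)
From Stdlib Require Import Reals Lra.
Open Scope R_scope.

Lemma Fdiag_surjective (F : R) :
  -1 <= F <= 3 -> exists th, - PI <= th <= PI /\ Fdiag th = F.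
Proof.
  intros HF.
  assert (Hc : -1 <= (F - 1) / 2 <= 1) by lra.
  exists (acos ((F - 1) / 2)).
  pose proof (acos_bound ((F - 1) / 2)). pose proof PI_RGT_0.
  split; [lra |].
  unfold Fdiag. rewrite cos_acos by exact Hc. field.
Qed.

Lemma dirac_cone_of_abs (r1 r2 : R -> R) (c g FD : R) :
  g <> 0 -> -1 <= FD <= 3 ->
  (forall F, r1 F = c + g * Rabs (F - FD)) ->
  (forall F, r2 F = c - g * Rabs (F - FD)) ->
  dirac_cone r1 r2 FD.
Proof.
  intros Hg HFD Hr1 Hr2.
  assert (Hr1D : r1 FD = c) by (rewrite Hr1, Rminus_diag, Rabs_R0; ring).
  assert (Hr2D : r2 FD = c) by (rewrite Hr2, Rminus_diag, Rabs_R0; ring).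
  split; [exact (Fdiag_surjective FD HFD) |].
  split; [congruence |].
  exists g, 0, 1. split; [exact Hg |]. split; [lra |].
  intros th _ _. rewrite Hr1, Hr2, Hr1D, Hr2D.
  replace (c + g * Rabs (Fdiag th - FD) - c - g * Rabs (Fdiag th - FD)) with 0
    by ring.
  replace (c - g * Rabs (Fdiag th - FD) - c + g * Rabs (Fdiag th - FD)) with 0
    by ring.
  rewrite Rabs_R0. lra.
Qed.

Lemma sqrt_4sqr (x : R) : sqrt (4 * x ^ 2) = 2 * Rabs x.
Proof.
  replace (4 * x ^ 2) with ((2 * Rabs x) ^ 2) by (rewrite <- (pow2_abs x); ring).
  apply sqrt_pow2. pose proof (Rabs_pos x). lra.
Qed.

Lemma branch_equal_potentials (t0 a : R) (s pm : bool) (F : R) :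
  branch t0 a a s pm F
  = - a / (3 + t0 ^ 2) + sgn pm * (/ (3 + t0 ^ 2)) * Rabs (F - sgn s * t0 ^ 2).
Proof.
  pose proof (pow2_ge_0 t0).
  unfold branch. rewrite Rminus_diag, pow_ne_zero, Rplus_0_r, sqrt_4sqr by discriminate.
  field. lra.
Qed.

Lemma sqrt_4sqr_add_sqr_pos (x d : R) : d <> 0 -> 0 < sqrt (4 * x ^ 2 + d ^ 2).
Proof.
  intros Hd. apply sqrt_lt_R0.
  pose proof (pow2_ge_0 x).
  assert (0 < d ^ 2) by (rewrite <- Rsqr_pow2; exact (Rsqr_pos_lt d Hd)).
  lra.
Qed.

Lemma branch_lower_lt_upper (t0 aa ab : R) (s s' : bool) (F : R) :
  aa <> ab -> branch t0 aa ab s' false F < branch t0 aa ab s true F.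
Proof.
  intros Hne.
  assert (Hd : aa - ab <> 0) by lra.
  pose proof (sqrt_4sqr_add_sqr_pos (F - sgn s * t0 ^ 2) _ Hd).
  pose proof (sqrt_pos (4 * (F - sgn s' * t0 ^ 2) ^ 2 + (aa - ab) ^ 2)).
  pose proof (pow2_ge_0 t0).
  unfold branch, Rdiv. simpl sgn.
  apply Rmult_lt_compat_r; [apply Rinv_0_lt_compat |]; lra.
Qed.

Theorem mainTheorem4 (t0 aa ab : R) :
  0 < t0 < 1 ->
  (* (a) Dirac cones at F = s t0^2, s = +1, -1 *)
  (aa = ab -> aa <> 0 ->
     forall s : bool,
       dirac_cone (branch t0 aa ab s true) (branch t0 aa ab s false) (sgn s * t0 ^ 2))
  /\
  (* (b) gaps: no upper branch touches a lower branch anywhere on the diagonal *)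
  (aa <> ab ->
     forall th : R, - PI <= th <= PI ->
       forall s s' : bool,
         branch t0 aa ab s true (Fdiag th) <> branch t0 aa ab s' false (Fdiag th)).
Proof.
  intros Ht. split.
  -
    intros <- _ s.
    assert (HT : 0 < 3 + t0 ^ 2) by (pose proof (pow2_ge_0 t0); lra).
    assert (Ht2 : t0 ^ 2 < 1) by (simpl; nra).
    apply (dirac_cone_of_abs _ _ (- aa / (3 + t0 ^ 2)) (/ (3 + t0 ^ 2))).
    + apply Rinv_neq_0_compat. lra.
    + destruct s; simpl sgn; split; nra.
    + intros F. rewrite branch_equal_potentials. simpl sgn. ring.
    + intros F. rewrite branch_equal_potentials. simpl sgn. ring.
  - intros Hne th _ s s' E.
    pose proof (branch_lower_lt_upper t0 aa ab s s' (Fdiag th) Hne). lra.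
Qed.
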